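(* Let $\beta\in[0,1]$ and $f\in\mathcal{A}_{\beta}$ with $f(z)=z+\sum_{n=2}^{\infty}a_nz^n$. Then $$|a_3-a_2^2|\le\frac{2}{3-2\beta}.$$ The inequality is sharp, with equality for the function $f_2\in\mathcal{A}_\beta$ defined by $\beta f_2(z)/z+(1-\beta)f_2'(z)=\frac{1+z^2}{1-z^2}$.
   Context: $\mathbb{D}=\{z\in\mathbb{C}:|z|<1\}$. For $\beta\in[0,1]$, $\mathcal{A}_{\beta}$ is the set of analytic functions $f$ on $\mathbb{D}$ with $f(0)=0$, $f'(0)=1$ (so $f(z)=z+\sum_{n\ge2}a_nz^n$) such that $\operatorname{Re}\big(\beta f(z)/z+(1-\beta)f'(z)\big)>0$ for all $z\in\mathbb{D}$. *)

From Stdlib Require Import Reals.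
From Coquelicot Require Import Coquelicot.
Open Scope R_scope.

Definition in_unit_disk (z : C) : Prop := Cmod z < 1.

Definition taylor_on_disk (f : C -> C) (a : nat -> C) : Prop :=
  forall z : C, in_unit_disk z -> is_pseries a z (f z).

Definition normalized_analytic (f : C -> C) : Prop :=
  exists a : nat -> C, taylor_on_disk f a /\ a 0%nat = 0%C /\ a 1%nat = 1%C.

(* The quantity beta f(z)/z + (1-beta) f'(z) is required to
   have positive real part at every z in the disk; at z = 0 the value of this
   (removable) expression is beta*1 + (1-beta)*1 = 1, so the condition there is
   automatic and we impose it for z <> 0.  f'(z) is the complex derivative. *)
Definition A_beta (beta : R) (f : C -> C) : Prop :=
  normalized_analytic f /\
  forall z : C, in_unit_disk z -> z <> 0%C ->
    exists d : C, is_derive (K := C_AbsRing) (V := C_NormedModule) f z d /\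
      0 < Re (RtoC beta * (f z / z) + RtoC (1 - beta) * d)%C.

From Stdlib Require Import Reals Lra Lia ClassicalEpsilon.
From Coquelicot Require Import Coquelicot.
Open Scope R_scope.

(* With p(z) = beta f(z)/z + (1 - beta) f'(z) = 1 + sum c_n z^n one has
   c_n = (1 + n (1 - beta)) a_(n+1), hence
   a_3 - a_2^2 = (c_2 - mu c_1^2) / (3 - 2 beta) with mu = (3 - 2 beta) / (2 - beta)^2 in [0, 1].
   Averaging |x_0 + x_1 conj(w) + x_2 conj(w)^2|^2 p(r w) over the N-th roots of unity w and
   letting N -> oo shows that the Toeplitz form of (c_n r^n) is positive semidefinite,
   because Re p >= 0; the choice x = (1, -mu r conj(c_1), -conj(u)) with
   u = (c_2 - mu c_1^2)/|c_2 - mu c_1^2| gives r^2 |c_2 - mu c_1^2| <= 2 for every r < 1.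
   Equality holds for the function whose p is (1 + z^2)/(1 - z^2). *)

(** * Complex power series *)

Lemma Cpow_pow_n (z : C) (n : nat) : pow_n (K := C_AbsRing) z n = Cpow z n.
Proof. induction n as [|n IH]; simpl; [reflexivity | now rewrite IH]. Qed.

Lemma is_pseries_C (a : nat -> C) (w l : C) :
  is_pseries a w l <-> is_series (fun n => Cpow w n * a n)%C l.
Proof.
  assert (E : forall n, scal (pow_n w n) (a n) = (Cpow w n * a n)%C).
  { intro n. change (pow_n (K := C_AbsRing) w n * a n = Cpow w n * a n)%C.
    now rewrite Cpow_pow_n. }
  unfold is_pseries; split; apply is_series_ext; intro n; [apply E | symmetry; apply E].
Qed.

Lemma is_series_C_unique (u : nat -> C) (l1 l2 : C) :
  is_series u l1 -> is_series u l2 -> l1 = l2.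
Proof. apply (filterlim_locally_unique (K := C_AbsRing) (V := C_NormedModule)). Qed.

Lemma is_series_C_plus (u v : nat -> C) (lu lv : C) :
  is_series u lu -> is_series v lv -> is_series (fun n => u n + v n)%C (lu + lv)%C.
Proof. exact (is_series_plus u v lu lv). Qed.

Lemma is_series_C_minus (u v : nat -> C) (lu lv : C) :
  is_series u lu -> is_series v lv -> is_series (fun n => u n - v n)%C (lu - lv)%C.
Proof. exact (is_series_minus u v lu lv). Qed.

Lemma is_series_C_scal (c : C) (u : nat -> C) (l : C) :
  is_series u l -> is_series (fun n => c * u n)%C (c * l)%C.
Proof. exact (is_series_scal c u l). Qed.

Lemma is_series_C_zero : is_series (fun _ => RtoC 0) (RtoC 0).
Proof.
  apply filterlim_ext with (fun _ => RtoC 0); [|apply filterlim_const].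
  intro n. induction n as [|n IH]; [now rewrite sum_O|].
  rewrite sum_Sn, <- IH. change (RtoC 0 = RtoC 0 + RtoC 0)%C. ring.
Qed.

Lemma is_series_C_shift (u : nat -> C) (l : C) :
  u 0%nat = 0%C -> is_series u l -> is_series (fun n => u (S n)) l.
Proof.
  intros Hu0 Hu. apply is_series_incr_1.
  match goal with |- is_series _ ?L => replace L with l; [exact Hu|] end.
  rewrite Hu0. change (l = l + 0)%C. ring.
Qed.

Lemma is_series_C_single (u : nat -> C) (l : C) :
  (forall n, u (S n) = 0%C) -> is_series u l -> l = u 0%nat.
Proof.
  intros Hu Hl. apply (is_series_C_unique u); [exact Hl|].
  apply is_series_decr_1.
  match goal with |- is_series _ ?L =>
    replace L with (RtoC 0) by (change (RtoC 0 = u 0%nat + - u 0%nat)%C; ring) end.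
  apply is_series_ext with (fun _ => RtoC 0); [intro n; now rewrite Hu | apply is_series_C_zero].
Qed.

Lemma Cmod_is_series_le (u : nat -> C) (l : C) (b : nat -> R) (lb : R) :
  is_series u l -> is_series b lb -> (forall n, Cmod (u n) <= b n) -> Cmod l <= lb.
Proof.
  intros Hu Hb Hub.
  assert (Hsum : forall n, Cmod (sum_n u n) <= sum_n b n).
  { induction n as [|n IH].
    - rewrite !sum_O. apply Hub.
    - rewrite !sum_Sn. eapply Rle_trans; [apply Cmod_triangle|].
      apply Rplus_le_compat; [exact IH | apply Hub]. }
  refine (is_lim_seq_le _ _ (Cmod l) lb Hsum _ Hb).
  eapply filterlim_comp; [exact Hu | exact (filterlim_norm (K := C_AbsRing) (V := C_NormedModule) l)].
Qed.

Lemma is_series_C_terms_bounded (u : nat -> C) (l : C) :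
  is_series u l -> exists B, forall n, Cmod (u n) <= B.
Proof.
  intro Hu. destruct (filterlim_bounded (sum_n u) (ex_intro _ l Hu)) as [M HM].
  exists (2 * M). intros [|n].
  - pose proof (HM 0%nat) as H0. rewrite sum_O in H0.
    pose proof (Cmod_ge_0 (u 0%nat)). change (Cmod (u 0%nat) <= M) in H0. lra.
  - pose proof (HM n) as Hn. pose proof (HM (S n)) as HSn. rewrite sum_Sn in HSn.
    change (Cmod (sum_n u n) <= M) in Hn.
    change (Cmod (sum_n u n + u (S n))%C <= M) in HSn.
    replace (u (S n)) with ((sum_n u n + u (S n)) - sum_n u n)%C by ring.
    eapply Rle_trans; [apply Cmod_triangle|]. rewrite Cmod_opp. lra.
Qed.

Lemma CV_radius_Cmod_gt (a : nat -> C) (r : R) :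
  (forall rho, r < rho < 1 -> ex_pseries a (RtoC rho)) -> 0 <= r < 1 ->
  Rbar_lt r (CV_radius (fun n => Cmod (a n))).
Proof.
  intros Ha Hr. set (rho := (1 + r) / 2).
  destruct (Ha rho ltac:(unfold rho; lra)) as [l Hl].
  apply is_pseries_C in Hl. destruct (is_series_C_terms_bounded _ _ Hl) as [B HB].
  apply Rbar_lt_le_trans with rho; [simpl; unfold rho; lra|].
  apply (proj1 (CV_radius_bounded _)). exists B. intro n.
  specialize (HB n). rewrite Cmod_mult, Cmod_pow, Cmod_R, Rabs_pos_eq in HB by (unfold rho; lra).
  rewrite Rabs_pos_eq; [lra|].
  apply Rmult_le_pos; [apply Cmod_ge_0 | apply pow_le; unfold rho; lra].
Qed.

Lemma taylor_on_disk_CV_radius (f : C -> C) (a : nat -> C) (r : R) :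
  taylor_on_disk f a -> 0 <= r < 1 -> Rbar_lt r (CV_radius (fun n => Cmod (a n))).
Proof.
  intros Hf Hr. apply CV_radius_Cmod_gt; [|exact Hr]. intros rho Hrho.
  exists (f rho). apply Hf. unfold in_unit_disk. rewrite Cmod_R, Rabs_pos_eq; lra.
Qed.

(** * Complex differentiability of power series *)

Definition PS_Cderive (a : nat -> C) (n : nat) : C := (RtoC (INR (S n)) * a (S n))%C.

Lemma Cmod_PS_Cderive (a : nat -> C) (n : nat) :
  Cmod (PS_Cderive a n) = PS_derive (fun k => Cmod (a k)) n.
Proof.
  unfold PS_Cderive, PS_derive.
  rewrite Cmod_mult, Cmod_R, Rabs_pos_eq; [reflexivity | apply pos_INR].
Qed.

Lemma ex_pseries_PS_Cderive (f : C -> C) (a : nat -> C) (z : C) :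
  taylor_on_disk f a -> Cmod z < 1 -> ex_pseries (PS_Cderive a) z.
Proof.
  intros Hf Hz.
  pose proof (taylor_on_disk_CV_radius f a (Cmod z) Hf (conj (Cmod_ge_0 z) Hz)) as Hr.
  rewrite <- CV_radius_derive, <- (Rabs_pos_eq (Cmod z) (Cmod_ge_0 z)) in Hr.
  apply (ex_series_le (K := C_AbsRing) (V := C_CompleteNormedModule)) with (2 := CV_disk_inside _ _ Hr).
  intro n. change (Cmod (pow_n (K := C_AbsRing) z n * PS_Cderive a n)%C
    <= Rabs (PS_derive (fun k => Cmod (a k)) n * Cmod z ^ n)).
  rewrite Cpow_pow_n, Cmod_mult, Cmod_pow, Cmod_PS_Cderive, Rabs_mult.
  rewrite (Rabs_pos_eq (Cmod z ^ n)) by (apply pow_le, Cmod_ge_0).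
  rewrite Rmult_comm. apply Rmult_le_compat_r; [apply pow_le, Cmod_ge_0 | apply Rle_abs].
Qed.

Definition pow_remainder (z h : C) (n : nat) : C :=
  (Cpow (z + h) (S n) - Cpow z (S n) - RtoC (INR (S n)) * h * Cpow z n)%C.

Lemma pow_remainder_0 (z h : C) : pow_remainder z h 0 = 0%C.
Proof. unfold pow_remainder. simpl. ring. Qed.

Lemma pow_remainder_S (z h : C) (n : nat) :
  pow_remainder z h (S n) = ((z + h) * pow_remainder z h n + RtoC (INR (S n)) * h * h * Cpow z n)%C.
Proof.
  unfold pow_remainder. rewrite (S_INR (S n)), RtoC_plus.
  change (Cpow ?x (S ?m)) with (x * Cpow x m)%C. simpl Cpow. ring.
Qed.

Lemma Cmod_pow_remainder_le (z h : C) (n : nat) :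
  Cmod (pow_remainder z h (S n))
    <= INR (S n) * INR (S (S n)) / 2 * Cmod h ^ 2 * (Cmod z + Cmod h) ^ n.
Proof.
  set (rho := Cmod z + Cmod h).
  pose proof (Cmod_ge_0 z). pose proof (Cmod_ge_0 h).
  assert (Hzh : Cmod (z + h) <= rho) by apply Cmod_triangle.
  induction n as [|n IH].
  - rewrite pow_remainder_S, pow_remainder_0.
    replace ((z + h) * 0 + RtoC (INR 1) * h * h * Cpow z 0)%C with (h * h)%C by (simpl; ring).
    rewrite Cmod_mult. simpl. lra.
  - rewrite pow_remainder_S. eapply Rle_trans; [apply Cmod_triangle|].
    rewrite !Cmod_mult, Cmod_pow, Cmod_R, Rabs_pos_eq by apply pos_INR.
    assert (Hrho : Cmod z ^ S n <= rho ^ S n) by (apply pow_incr; unfold rho; lra).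
    pose proof (pow_le rho n ltac:(unfold rho; lra)).
    pose proof (Cmod_ge_0 (pow_remainder z h (S n))).
    assert (Hrem : Cmod (z + h) * Cmod (pow_remainder z h (S n))
                 <= rho * (INR (S n) * INR (S (S n)) / 2 * Cmod h ^ 2 * rho ^ n))
      by (apply Rmult_le_compat; auto using Cmod_ge_0).
    assert (Hlead : INR (S (S n)) * Cmod h * Cmod h * Cmod z ^ S n
                 <= INR (S (S n)) * Cmod h * Cmod h * rho ^ S n).
    { apply Rmult_le_compat_l; [|exact Hrho].
      pose proof (pos_INR (S (S n))). apply Rmult_le_pos; [apply Rmult_le_pos|]; lra. }
    rewrite !S_INR in *. simpl pow in *. nra.
Qed.

Lemma Cmod_taylor_remainder_le (f : C -> C) (a : nat -> C) (z h D : C) (rho : R) :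
  taylor_on_disk f a -> Cmod z + Cmod h <= rho < 1 -> is_pseries (PS_Cderive a) z D ->
  Cmod (f (z + h) - f z - h * D)%C
    <= Cmod h ^ 2 / 2 * Series (fun n => Rabs (PS_derive (PS_derive (fun k => Cmod (a k))) n * rho ^ n)).
Proof.
  intros Hf Hrho HD.
  pose proof (Cmod_ge_0 z). pose proof (Cmod_ge_0 h).
  assert (Hz : Cmod z < 1) by lra.
  assert (Hw : Cmod (z + h) < 1) by (pose proof (Cmod_triangle z h); lra).
  assert (Hex : ex_series (fun n => Rabs (PS_derive (PS_derive (fun k => Cmod (a k))) n * rho ^ n))).
  { apply CV_disk_inside. rewrite !CV_radius_derive, Rabs_pos_eq by lra.
    apply (taylor_on_disk_CV_radius f); [exact Hf | lra]. }
  pose proof (is_series_C_minus _ _ _ _ (proj1 (is_pseries_C _ _ _) (Hf _ Hw))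
                (proj1 (is_pseries_C _ _ _) (Hf _ Hz))) as Hdiff.
  apply is_series_C_shift in Hdiff; [|simpl; ring].
  pose proof (is_series_C_minus _ _ _ _ Hdiff
                (is_series_C_scal h _ _ (proj1 (is_pseries_C _ _ _) HD))) as Hrem.
  apply is_series_C_shift in Hrem; [|unfold PS_Cderive; simpl; ring].
  apply (Cmod_is_series_le _ _ _ _ Hrem
    (is_series_scal (K := R_AbsRing) (V := R_NormedModule) _ _ _ (Series_correct _ Hex))).
  intro n. change (scal ?c ?x) with (c * x).
  replace ((z + h) ^ S (S n) * a (S (S n)) - z ^ S (S n) * a (S (S n))
           - h * (z ^ S n * PS_Cderive a (S n)))%C
    with (a (S (S n)) * pow_remainder z h (S n))%C
    by (unfold pow_remainder, PS_Cderive; ring).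
  unfold PS_derive. rewrite Cmod_mult.
  pose proof (Cmod_pow_remainder_le z h n) as Hbound.
  pose proof (Cmod_ge_0 (a (S (S n)))).
  pose proof (pos_INR (S n)). pose proof (pos_INR (S (S n))).
  assert (Hpow : (Cmod z + Cmod h) ^ n <= rho ^ n) by (apply pow_incr; lra).
  pose proof (pow_le (Cmod z + Cmod h) n ltac:(lra)).
  rewrite Rabs_pos_eq by (apply Rmult_le_pos; [apply Rmult_le_pos; [|apply Rmult_le_pos] | apply pow_le]; lra).
  apply Rle_trans with (Cmod (a (S (S n))) * (INR (S n) * INR (S (S n)) / 2 * Cmod h ^ 2 * rho ^ n)).
  - apply Rmult_le_compat_l; [lra|]. eapply Rle_trans; [exact Hbound|].
    apply Rmult_le_compat_l; [|exact Hpow].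
    apply Rmult_le_pos; [|apply pow2_ge_0]. apply Rmult_le_pos; [apply Rmult_le_pos|]; lra.
  - right. field.
Qed.

Lemma is_derive_C_of_quadratic_remainder (f : C -> C) (z D : C) (delta K : R) :
  0 < delta ->
  (forall h, Cmod h < delta -> Cmod (f (z + h) - f z - h * D)%C <= K * Cmod h ^ 2) ->
  is_derive (K := C_AbsRing) (V := C_NormedModule) f z D.
Proof.
  intros Hdelta Hrem. split; [apply is_linear_scal_l|].
  intros x Hx.
  apply (is_filter_lim_locally_unique (K := C_AbsRing) (V := AbsRing_NormedModule C_AbsRing)) in Hx.
  subst x. intro eps.
  set (K' := Rabs K + 1).
  assert (HK' : 0 < K') by (unfold K'; pose proof (Rabs_pos K); lra).
  assert (Hr : 0 < Rmin delta (eps / K'))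
    by (apply Rmin_pos; [exact Hdelta | apply Rdiv_lt_0_compat; [apply cond_pos | exact HK']]).
  exists (mkposreal _ Hr). intros y Hy.
  change (Cmod (f y - f z - (y - z) * D)%C <= eps * Cmod (y - z)%C).
  change (Cmod (y - z)%C < Rmin delta (eps / K')) in Hy.
  set (h := (y - z)%C) in *.
  replace y with (z + h)%C by (unfold h; ring).
  assert (Hh : Cmod h < delta) by (pose proof (Rmin_l delta (eps / K')); lra).
  assert (HhK : K' * Cmod h <= eps).
  { pose proof (Rmin_r delta (eps / K')).
    replace (pos eps) with (K' * (eps / K')) by (field; lra).
    apply Rmult_le_compat_l; lra. }
  eapply Rle_trans; [exact (Hrem h Hh)|].
  pose proof (Cmod_ge_0 h). pose proof (Rle_abs K).
  assert (K <= K') by (unfold K'; lra).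
  simpl. nra.
Qed.

Lemma is_derive_taylor_on_disk (f : C -> C) (a : nat -> C) (z : C) :
  taylor_on_disk f a -> Cmod z < 1 ->
  exists D, is_pseries (PS_Cderive a) z D /\ is_derive (K := C_AbsRing) (V := C_NormedModule) f z D.
Proof.
  intros Hf Hz. destruct (ex_pseries_PS_Cderive f a z Hf Hz) as [D HD].
  exists D. split; [exact HD|].
  set (rho := (1 + Cmod z) / 2).
  set (M := Series (fun n => Rabs (PS_derive (PS_derive (fun k => Cmod (a k))) n * rho ^ n))).
  apply (is_derive_C_of_quadratic_remainder f z D (rho - Cmod z) (M / 2)); [unfold rho; lra|].
  intros h Hh. replace (M / 2 * Cmod h ^ 2) with (Cmod h ^ 2 / 2 * M) by field.
  apply (Cmod_taylor_remainder_le f); [exact Hf | unfold rho in *; lra | exact HD].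
Qed.

(** * Finite sums and roots of unity *)

(* [Csum u n] sums [u k] for [k < n], whereas Coquelicot's [sum_n u n] includes [k = n]. *)
Fixpoint Csum (u : nat -> C) (n : nat) : C :=
  match n with O => 0%C | S m => (Csum u m + u m)%C end.

Lemma Csum_ext (u v : nat -> C) (n : nat) :
  (forall k, (k < n)%nat -> u k = v k) -> Csum u n = Csum v n.
Proof.
  induction n as [|n IH]; intro Huv; simpl; [reflexivity|].
  rewrite IH, (Huv n); [reflexivity | lia | intros; apply Huv; lia].
Qed.

Lemma Csum_scal_l (c : C) (u : nat -> C) (n : nat) :
  Csum (fun k => c * u k)%C n = (c * Csum u n)%C.
Proof. induction n as [|n IH]; simpl; [ring | rewrite IH; ring]. Qed.

Lemma Csum_const_1 (n : nat) : Csum (fun _ => 1%C) n = RtoC (INR n).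
Proof. induction n as [|n IH]; [reflexivity|]. simpl Csum. now rewrite IH, S_INR, RtoC_plus. Qed.

Lemma Csum_geom (x : C) (n : nat) : ((1 - x) * Csum (fun k => Cpow x k) n = 1 - Cpow x n)%C.
Proof. induction n as [|n IH]; simpl; [ring | rewrite Cmult_plus_distr_l, IH; ring]. Qed.

Lemma Re_Csum_nonneg (u : nat -> C) (n : nat) :
  (forall k, 0 <= Re (u k)) -> 0 <= Re (Csum u n).
Proof.
  intro Hu. induction n as [|n IH]; simpl Csum; [simpl; lra|].
  change (0 <= Re (Csum u n) + Re (u n)). specialize (Hu n). lra.
Qed.

Lemma Cmod_Csum_le_Re (u v : nat -> C) (n : nat) :
  (forall k, Cmod (u k) <= Re (v k)) -> Cmod (Csum u n) <= Re (Csum v n).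
Proof.
  intro Huv. induction n as [|n IH]; simpl Csum; [rewrite Cmod_0; simpl; lra|].
  eapply Rle_trans; [apply Cmod_triangle|].
  change (Cmod (Csum u n) + Cmod (u n) <= Re (Csum v n) + Re (v n)). specialize (Huv n). lra.
Qed.

Lemma is_series_Csum (u : nat -> nat -> C) (l : nat -> C) (n : nat) :
  (forall k, is_series (u k) (l k)) -> is_series (fun m => Csum (fun k => u k m) n) (Csum l n).
Proof.
  intro Hu. induction n as [|n IH]; simpl.
  - apply is_series_C_zero.
  - exact (is_series_C_plus _ _ _ _ IH (Hu n)).
Qed.

Definition cis (t : R) : C := (cos t, sin t).

Lemma cis_add (s t : R) : (cis s * cis t)%C = cis (s + t).
Proof. unfold cis, Cmult. simpl. rewrite cos_plus, sin_plus. f_equal; ring. Qed.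

Lemma cis_pow (t : R) (n : nat) : Cpow (cis t) n = cis (INR n * t).
Proof.
  induction n as [|n IH].
  - unfold cis. simpl. now rewrite Rmult_0_l, cos_0, sin_0.
  - simpl Cpow. rewrite IH, cis_add, S_INR. f_equal. ring.
Qed.

Lemma Cmod_cis (t : R) : Cmod (cis t) = 1.
Proof.
  unfold Cmod, cis. simpl.
  replace (cos t * (cos t * 1) + sin t * (sin t * 1)) with 1; [apply sqrt_1|].
  pose proof (sin2_cos2 t). unfold Rsqr in *. lra.
Qed.

Definition root_of_unity (N : nat) : C := cis (2 * PI / INR N).

Lemma Cmod_root_of_unity_pow (N k : nat) : Cmod (Cpow (root_of_unity N) k) = 1.
Proof. unfold root_of_unity. rewrite Cmod_pow, Cmod_cis. apply pow1. Qed.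

Lemma root_of_unity_pow_N (N : nat) : (0 < N)%nat -> Cpow (root_of_unity N) N = 1%C.
Proof.
  intro HN. pose proof (lt_0_INR N HN).
  unfold root_of_unity. rewrite cis_pow.
  replace (INR N * (2 * PI / INR N)) with (2 * PI) by (field; lra).
  unfold cis. now rewrite cos_2PI, sin_2PI.
Qed.

Lemma root_of_unity_pow_neq_1 (N s : nat) : (0 < s < N)%nat -> Cpow (root_of_unity N) s <> 1%C.
Proof.
  intros Hs Heq. unfold root_of_unity in Heq. rewrite cis_pow in Heq.
  pose proof (lt_0_INR N ltac:(lia)).
  set (t := INR s * (2 * PI / INR N) / 2) in Heq.
  assert (Ht : 0 < t < PI).
  { pose proof (lt_0_INR s ltac:(lia)). pose proof (lt_INR s N ltac:(lia)). pose proof PI_RGT_0.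
    unfold t. replace (INR s * (2 * PI / INR N) / 2) with (PI * (INR s / INR N)) by (field; lra).
    assert (0 < INR s / INR N < 1).
    { split; [apply Rdiv_lt_0_compat; lra|].
      apply (Rmult_lt_reg_r (INR N)); [lra|]. field_simplify; lra. }
    split; nra. }
  injection Heq as Hcos _.
  replace (INR s * (2 * PI / INR N)) with (2 * t) in Hcos by (unfold t; field; lra).
  rewrite cos_2a_sin in Hcos. pose proof (sin_gt_0 t (proj1 Ht) (proj2 Ht)). nra.
Qed.

Lemma Csum_root_of_unity_pow (N q s : nat) : (s < N)%nat ->
  Csum (fun k => Cpow (Cpow (root_of_unity N) k) (N * q + s)) N
    = if (s =? 0)%nat then RtoC (INR N) else 0%C.
Proof.
  intro Hs. set (w := root_of_unity N).
  assert (HwN : Cpow w N = 1%C) by (apply root_of_unity_pow_N; lia).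
  rewrite (Csum_ext _ (fun k => Cpow (Cpow w s) k)).
  2: { intros k _. rewrite <- !Cpow_mult_r, Nat.mul_add_distr_l, Cpow_add_r.
       rewrite (Nat.mul_comm k (N * q)), <- Nat.mul_assoc, Cpow_mult_r, HwN, Cpow_1_l, Cmult_1_l.
       now rewrite Nat.mul_comm. }
  destruct (Nat.eqb_spec s 0) as [->|Hs0].
  - rewrite (Csum_ext _ (fun _ => 1%C)) by (intros; apply Cpow_1_l). apply Csum_const_1.
  - assert (Hx : (1 - Cpow w s)%C <> 0%C).
    { intro H0. apply (root_of_unity_pow_neq_1 N s); [lia|]. apply Ceq_minus in H0. now symmetry. }
    pose proof (Csum_geom (Cpow w s) N) as Hgeom.
    rewrite <- Cpow_mult_r, Nat.mul_comm, Cpow_mult_r, HwN, Cpow_1_l in Hgeom.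
    transitivity (/ (1 - Cpow w s) * ((1 - Cpow w s) * Csum (fun k => Cpow (Cpow w s) k) N))%C;
      [field; exact Hx|].
    rewrite Hgeom. ring.
Qed.

(** * Functions with positive real part *)

Definition caratheodory (c : nat -> C) (p : C -> C) : Prop :=
  c 0%nat = 1%C /\ forall z, 0 < Cmod z < 1 -> is_pseries c z (p z) /\ 0 <= Re (p z).

Lemma caratheodory_ex_series (c : nat -> C) (p : C -> C) (r : R) :
  caratheodory c p -> 0 <= r < 1 -> ex_series (fun m => Cmod (c m) * r ^ m).
Proof.
  intros [_ Hp] Hr.
  assert (Hrad : Rbar_lt (Rabs r) (CV_radius (fun m => Cmod (c m)))).
  { rewrite Rabs_pos_eq by lra. apply CV_radius_Cmod_gt; [|exact Hr].
    intros rho Hrho. exists (p rho). apply Hp. rewrite Cmod_R, Rabs_pos_eq; lra. }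
  refine (ex_series_ext _ _ _ (CV_disk_inside _ _ Hrad)). intro m.
  apply Rabs_pos_eq, Rmult_le_pos; [apply Cmod_ge_0 | apply pow_le; lra].
Qed.

(* The real part of [toeplitz_form c r x0 x1 x2] is the Hermitian Toeplitz form
   [sum_(j,l<3) x_j (x_l)^* c_(j-l) r^|j-l|], where [c_(-k) = (c_k)^*]. *)
Definition toeplitz_form (c : nat -> C) (r : R) (x0 x1 x2 : C) : C :=
  (RtoC (Cmod x0 ^ 2 + Cmod x1 ^ 2 + Cmod x2 ^ 2)
   + (x1 * Cconj x0 + x2 * Cconj x1) * c 1%nat * RtoC r
   + x2 * Cconj x0 * c 2%nat * RtoC (r ^ 2))%C.

Definition Csum3x3 (F : nat -> nat -> C) : C :=
  (F 0 0 + F 0 1 + F 0 2 + F 1 0 + F 1 1 + F 1 2 + F 2 0 + F 2 1 + F 2 2)%C%nat.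

Lemma Csum_Csum3x3 (al : nat -> nat -> C) (g : nat -> nat -> nat -> C) (n : nat) :
  Csum (fun k => Csum3x3 (fun j l => al j l * g j l k))%C n
    = Csum3x3 (fun j l => al j l * Csum (g j l) n)%C.
Proof. induction n as [|n IH]; unfold Csum3x3 in *; simpl Csum; [ring | rewrite IH; ring]. Qed.

Lemma sum_n_C_head3 (t : nat -> C) (K : nat) :
  (2 <= K)%nat -> (forall m, (3 <= m <= K)%nat -> t m = 0%C) ->
  sum_n t K = (t 0%nat + t 1%nat + t 2%nat)%C.
Proof.
  intros HK Ht. induction K as [|K IH]; [lia|].
  destruct (Nat.eq_dec K 1) as [->|HK1].
  - now rewrite sum_Sn, sum_Sn, sum_O.
  - rewrite sum_Sn, IH, (Ht (S K)) by (lia || (intros; apply Ht; lia)).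
    change (t 0%nat + t 1%nat + t 2%nat + 0 = t 0%nat + t 1%nat + t 2%nat)%C. ring.
Qed.

Section RootsOfUnityAverage.

Variables (N : nat) (x0 x1 x2 : C).
Hypothesis HN : (5 <= N)%nat.

Definition zeta (k : nat) : C := Cpow (root_of_unity N) k.

Definition xcoef (j : nat) : C := match j with 0%nat => x0 | 1%nat => x1 | _ => x2 end.

Definition weight (k : nat) : R :=
  Cmod (x0 + x1 * Cconj (zeta k) + x2 * (Cconj (zeta k) * Cconj (zeta k)))%C ^ 2.

Definition moment (m : nat) : C := Csum (fun k => RtoC (weight k) * Cpow (zeta k) m)%C N.

Lemma Cconj_zeta (k : nat) : Cconj (zeta k) = Cpow (zeta k) (N - 1).
Proof.
  assert (Hunit : (zeta k * Cconj (zeta k))%C = 1%C).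
  { rewrite <- Cmod2_conj. unfold zeta. rewrite Cmod_root_of_unity_pow. simpl. f_equal; ring. }
  assert (HN1 : (zeta k * Cpow (zeta k) (N - 1))%C = 1%C).
  { change (Cpow (zeta k) (S (N - 1)) = 1%C). replace (S (N - 1)) with N by lia.
    unfold zeta. rewrite <- Cpow_mult_r, Nat.mul_comm, Cpow_mult_r, root_of_unity_pow_N by lia.
    apply Cpow_1_l. }
  transitivity (Cconj (zeta k) * (zeta k * Cpow (zeta k) (N - 1)))%C; [rewrite HN1; ring|].
  transitivity ((zeta k * Cconj (zeta k)) * Cpow (zeta k) (N - 1))%C; [ring | rewrite Hunit; ring].
Qed.

Lemma weight_mul_zeta_pow (k m : nat) :
  (RtoC (weight k) * Cpow (zeta k) m)%C
    = Csum3x3 (fun j l => xcoef j * Cconj (xcoef l) * Cpow (zeta k) ((N - 1) * j + l + m))%C.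
Proof.
  unfold weight. rewrite Cmod2_conj. unfold Csum3x3.
  rewrite !Cpow_add_r, !Cpow_mult_r, <- Cconj_zeta.
  rewrite !Cplus_conj, !Cmult_conj, !Cconj_conj. simpl xcoef. simpl Cpow. ring.
Qed.

Lemma Csum_zeta_pow (j l m : nat) : (j <= 2)%nat -> (l <= 2)%nat -> (m <= N - 3)%nat ->
  Csum (fun k => Cpow (zeta k) ((N - 1) * j + l + m)) N
    = if (l + m =? j)%nat then RtoC (INR N) else 0%C.
Proof.
  intros Hj Hl Hm. unfold zeta.
  destruct (Nat.eqb_spec (l + m) j) as [E|E].
  - replace ((N - 1) * j + l + m)%nat with (N * j + 0)%nat by (destruct j as [|[|[|j]]]; lia).
    now rewrite Csum_root_of_unity_pow by lia.
  - destruct (Compare_dec.lt_dec j (l + m)) as [Hlt|Hge].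
    + replace ((N - 1) * j + l + m)%nat with (N * j + (l + m - j))%nat
        by (destruct j as [|[|[|j]]]; lia).
      rewrite Csum_root_of_unity_pow by lia.
      destruct (Nat.eqb_spec (l + m - j) 0); [lia | reflexivity].
    + replace ((N - 1) * j + l + m)%nat with (N * (j - 1) + (N + l + m - j))%nat
        by (destruct j as [|[|[|j]]]; lia).
      rewrite Csum_root_of_unity_pow by lia.
      destruct (Nat.eqb_spec (N + l + m - j) 0); [lia | reflexivity].
Qed.

Lemma moment_eq (m : nat) : (m <= N - 3)%nat ->
  moment m = Csum3x3 (fun j l => xcoef j * Cconj (xcoef l)
                                 * (if (l + m =? j)%nat then RtoC (INR N) else 0%C))%C.
Proof.
  intro Hm. unfold moment.
  rewrite (Csum_ext _ (fun k => Csum3x3 (fun j l => xcoef j * Cconj (xcoef l)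
             * (fun j l k => Cpow (zeta k) ((N - 1) * j + l + m)) j l k)%C))
    by (intros k _; apply weight_mul_zeta_pow).
  rewrite Csum_Csum3x3. unfold Csum3x3. rewrite !Csum_zeta_pow by lia. reflexivity.
Qed.

Lemma moment_0 : moment 0 = (RtoC (INR N) * (x0 * Cconj x0 + x1 * Cconj x1 + x2 * Cconj x2))%C.
Proof. rewrite moment_eq by lia. unfold Csum3x3. simpl. ring. Qed.

Lemma moment_1 : moment 1 = (RtoC (INR N) * (x1 * Cconj x0 + x2 * Cconj x1))%C.
Proof. rewrite moment_eq by lia. unfold Csum3x3. simpl. ring. Qed.

Lemma moment_2 : moment 2 = (RtoC (INR N) * (x2 * Cconj x0))%C.
Proof. rewrite moment_eq by lia. unfold Csum3x3. simpl. ring. Qed.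

Lemma moment_vanish (m : nat) : (3 <= m <= N - 3)%nat -> moment m = 0%C.
Proof.
  intro Hm. rewrite moment_eq by lia. unfold Csum3x3.
  rewrite !(proj2 (Nat.eqb_neq _ _)) by lia. ring.
Qed.

Lemma Cmod_moment_le (m : nat) :
  Cmod (moment m) <= INR N * (Cmod x0 ^ 2 + Cmod x1 ^ 2 + Cmod x2 ^ 2).
Proof.
  replace (INR N * (Cmod x0 ^ 2 + Cmod x1 ^ 2 + Cmod x2 ^ 2)) with (Re (moment 0)).
  - apply Cmod_Csum_le_Re. intro k.
    rewrite Cmod_mult, Cmod_R, Rabs_pos_eq by apply pow2_ge_0.
    unfold zeta. rewrite <- Cpow_mult_r, Cmod_root_of_unity_pow. simpl. lra.
  - rewrite moment_0, <- !Cmod2_conj, <- !RtoC_plus, <- RtoC_mult. reflexivity.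
Qed.

Lemma Cmod_scal_zeta (r : R) (k : nat) : 0 < r < 1 -> 0 < Cmod (RtoC r * zeta k) < 1.
Proof. intro Hr. unfold zeta. rewrite Cmod_mult, Cmod_R, Cmod_root_of_unity_pow, Rabs_pos_eq; lra. Qed.

Definition weighted_average (p : C -> C) (r : R) : C :=
  Csum (fun k => RtoC (weight k) * p (RtoC r * zeta k))%C N.

Lemma Re_weighted_average_nonneg (c : nat -> C) (p : C -> C) (r : R) :
  caratheodory c p -> 0 < r < 1 -> 0 <= Re (weighted_average p r).
Proof.
  intros [_ Hp] Hr. apply Re_Csum_nonneg. intro k. rewrite re_scal_l.
  apply Rmult_le_pos; [apply pow2_ge_0 | apply Hp, Cmod_scal_zeta, Hr].
Qed.

Lemma is_series_weighted_average (c : nat -> C) (p : C -> C) (r : R) :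
  caratheodory c p -> 0 < r < 1 ->
  is_series (fun m => c m * RtoC (r ^ m) * moment m)%C (weighted_average p r).
Proof.
  intros [_ Hp] Hr.
  apply (is_series_ext (fun m => Csum (fun k => RtoC (weight k) * (Cpow (RtoC r * zeta k) m * c m)) N))%C.
  - intro m. unfold moment. rewrite <- Csum_scal_l. apply Csum_ext. intros k _.
    rewrite Cpow_mult_l, RtoC_pow. ring.
  - apply is_series_Csum. intro k.
    apply is_series_C_scal, is_pseries_C, Hp, Cmod_scal_zeta, Hr.
Qed.

Lemma sum_n_moment_head (c : nat -> C) (r : R) : c 0%nat = 1%C ->
  sum_n (fun m => c m * RtoC (r ^ m) * moment m)%C (N - 3)
    = (RtoC (INR N) * toeplitz_form c r x0 x1 x2)%C.
Proof.
  intro Hc0.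
  rewrite sum_n_C_head3 by (lia || (intros m Hm; rewrite moment_vanish by lia; ring)).
  change (c 0%nat * RtoC (r ^ 0) * moment 0 + c 1%nat * RtoC (r ^ 1) * moment 1
          + c 2%nat * RtoC (r ^ 2) * moment 2 = RtoC (INR N) * toeplitz_form c r x0 x1 x2)%C.
  rewrite moment_0, moment_1, moment_2, Hc0.
  unfold toeplitz_form. rewrite !RtoC_plus, !Cmod2_conj, !RtoC_pow. simpl Cpow. ring.
Qed.

End RootsOfUnityAverage.

Lemma Re_toeplitz_form_ge_tail (c : nat -> C) (p : C -> C) (r : R) (N : nat) (x0 x1 x2 : C) :
  caratheodory c p -> 0 < r < 1 -> (5 <= N)%nat ->
  - (Cmod x0 ^ 2 + Cmod x1 ^ 2 + Cmod x2 ^ 2)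
      * Series (fun k => Cmod (c (N - 2 + k)%nat) * r ^ (N - 2 + k))
    <= Re (toeplitz_form c r x0 x1 x2).
Proof.
  intros Hcar Hr HN.
  set (tot := weighted_average N x0 x1 x2 p r).
  pose proof (lt_0_INR N ltac:(lia)) as HNpos.
  assert (Htail : is_series (fun k => c (N - 2 + k)%nat * RtoC (r ^ (N - 2 + k))
                                      * moment N x0 x1 x2 (N - 2 + k))%C
                            (tot - RtoC (INR N) * toeplitz_form c r x0 x1 x2)%C).
  { apply (is_series_incr_n (fun m => c m * RtoC (r ^ m) * moment N x0 x1 x2 m)%C); [lia|].
    replace (pred (N - 2)) with (N - 3)%nat by lia.
    match goal with |- is_series _ ?L => replace L with tot end.
    - exact (is_series_weighted_average N x0 x1 x2 c p r Hcar Hr).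
    - change (tot = tot - RtoC (INR N) * toeplitz_form c r x0 x1 x2
                    + sum_n (fun m => c m * RtoC (r ^ m) * moment N x0 x1 x2 m) (N - 3))%C.
      rewrite sum_n_moment_head by (exact HN || exact (proj1 Hcar)). ring. }
  set (Q := toeplitz_form c r x0 x1 x2) in *.
  set (sq := Cmod x0 ^ 2 + Cmod x1 ^ 2 + Cmod x2 ^ 2).
  set (tau := Series (fun k => Cmod (c (N - 2 + k)%nat) * r ^ (N - 2 + k))).
  assert (Hex : ex_series (fun k => Cmod (c (N - 2 + k)%nat) * r ^ (N - 2 + k))).
  { apply (ex_series_incr_n (K := R_AbsRing) (fun m => Cmod (c m) * r ^ m)).
    apply (caratheodory_ex_series c p); [exact Hcar | lra]. }
  assert (Hle : Cmod (tot - RtoC (INR N) * Q)%C <= INR N * sq * tau).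
  { apply (Cmod_is_series_le _ _ _ _ Htail
      (is_series_scal (K := R_AbsRing) (V := R_NormedModule) _ _ _ (Series_correct _ Hex))).
    intro k. change (scal ?a ?b) with (a * b).
    rewrite !Cmod_mult, Cmod_R, Rabs_pos_eq by (apply pow_le; lra).
    pose proof (Cmod_moment_le N x0 x1 x2 HN (N - 2 + k)).
    pose proof (Cmod_ge_0 (c (N - 2 + k)%nat)). pose proof (pow_le r (N - 2 + k) ltac:(lra)).
    rewrite Rmult_comm. apply Rmult_le_compat_r; [apply Rmult_le_pos|]; assumption. }
  pose proof (Re_weighted_average_nonneg N x0 x1 x2 c p r Hcar Hr) as Htot. fold tot in Htot.
  assert (Hre : Re (tot - RtoC (INR N) * Q)%C = Re tot - INR N * Re Q).
  { destruct tot, Q. unfold Cminus, Cplus, Copp, Cmult, RtoC, Re. simpl. ring. }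
  pose proof (re_le_Cmod (tot - RtoC (INR N) * Q)%C) as Hmod. rewrite Hre in Hmod.
  pose proof (Rle_abs (Re tot - INR N * Re Q)).
  apply (Rmult_le_reg_l (INR N)); [exact HNpos|].
  replace (INR N * (- sq * tau)) with (- (INR N * sq * tau)) by ring.
  lra.
Qed.

Lemma Series_tail_lim (u : nat -> R) :
  ex_series u -> is_lim_seq (fun n => Series (fun k => u (n + k)%nat)) 0.
Proof.
  intro Hu. apply is_lim_seq_incr_1.
  apply is_lim_seq_ext with (fun n => Series u - sum_n u n).
  { intro n. rewrite (Series_incr_n u (S n)), sum_n_Reals by (lia || exact Hu). simpl. ring. }
  replace (Finite 0) with (Rbar_minus (Series u) (Series u)) by (simpl; f_equal; ring).
  apply is_lim_seq_minus'; [apply is_lim_seq_const | exact (Series_correct _ Hu)].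
Qed.

Lemma Re_toeplitz_form_nonneg (c : nat -> C) (p : C -> C) (r : R) (x0 x1 x2 : C) :
  caratheodory c p -> 0 < r < 1 -> 0 <= Re (toeplitz_form c r x0 x1 x2).
Proof.
  intros Hcar Hr.
  set (sq := Cmod x0 ^ 2 + Cmod x1 ^ 2 + Cmod x2 ^ 2).
  set (tail := fun n => Series (fun k => Cmod (c (n + k)%nat) * r ^ (n + k))).
  assert (Hlim : is_lim_seq (fun n => - sq * tail (n + 3)%nat) (- sq * 0)).
  { apply (is_lim_seq_scal_l _ (- sq) 0).
    apply (is_lim_seq_incr_n tail 3 0).
    apply (Series_tail_lim (fun m => Cmod (c m) * r ^ m)).
    apply (caratheodory_ex_series c p); [exact Hcar | lra]. }
  rewrite Rmult_0_r in Hlim.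
  refine (is_lim_seq_le _ _ 0 (Re (toeplitz_form c r x0 x1 x2)) _ Hlim (is_lim_seq_const _)).
  intro n. unfold tail. replace (n + 3)%nat with (n + 5 - 2)%nat by lia.
  apply (Re_toeplitz_form_ge_tail c p); [exact Hcar | exact Hr | lia].
Qed.

Lemma Cconj_RtoC (x : R) : Cconj (RtoC x) = RtoC x.
Proof. unfold Cconj, RtoC. simpl. f_equal. ring. Qed.

Lemma Rle_of_forall_scale_lt_1 (m b : R) :
  0 <= b -> (forall t, 0 < t < 1 -> t * m <= b) -> m <= b.
Proof.
  intros Hb Hscale. destruct (Rle_or_lt m b) as [Hle|Hlt]; [exact Hle|].
  set (t := (1 + b / m) / 2).
  assert (Hbm : 0 <= b / m < 1).
  { split; [apply Rdiv_le_0_compat; lra|].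
    apply (Rmult_lt_reg_r m); [lra|]. field_simplify; lra. }
  assert (Htm : t * m = (m + b) / 2) by (unfold t; field; lra).
  specialize (Hscale t ltac:(unfold t; lra)). lra.
Qed.

Lemma caratheodory_Cmod_coef2_sub_le (c : nat -> C) (p : C -> C) (mu : R) :
  caratheodory c p -> 0 <= mu <= 1 ->
  Cmod (c 2%nat - RtoC mu * (c 1%nat * c 1%nat))%C <= 2.
Proof.
  intros Hcar Hmu.
  set (w := (c 2%nat - RtoC mu * (c 1%nat * c 1%nat))%C).
  set (m := Cmod w).
  destruct (Req_dec m 0) as [Hm0|Hm0]; [lra|].
  assert (Hmpos : 0 < m) by (pose proof (Cmod_ge_0 w); unfold m in *; lra).
  set (lam := (RtoC (/ m) * Cconj w)%C).
  assert (Hlam : Cmod lam = 1).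
  { unfold lam. rewrite Cmod_mult, Cmod_R, Cmod_conj, Rabs_pos_eq.
    - fold m. field. lra.
    - apply Rlt_le, Rinv_0_lt_compat; lra. }
  assert (Hlw : (lam * w)%C = RtoC m).
  { unfold lam. replace (RtoC (/ m) * Cconj w * w)%C with (RtoC (/ m) * (w * Cconj w))%C by ring.
    rewrite <- Cmod2_conj. fold m. rewrite <- RtoC_mult. f_equal. field. lra. }
  apply Rle_of_forall_scale_lt_1; [lra|]. intros t Ht.
  set (r := sqrt t).
  assert (Hr : 0 < r < 1).
  { unfold r. split; [apply sqrt_lt_R0; lra|]. rewrite <- sqrt_1. apply sqrt_lt_1_alt. lra. }
  replace t with (r ^ 2) by (unfold r; simpl; rewrite Rmult_1_r, sqrt_sqrt; lra).
  set (x1 := (RtoC (- (mu * r)) * Cconj (c 1%nat))%C).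
  assert (Hform : toeplitz_form c r 1 x1 (- lam)
                  = RtoC (2 + (mu ^ 2 - mu) * (r ^ 2 * Cmod (c 1%nat) ^ 2) - r ^ 2 * m)).
  { unfold toeplitz_form. rewrite Cmod_opp, Hlam, Cmod_1.
    repeat (rewrite RtoC_plus || rewrite RtoC_minus || rewrite RtoC_mult).
    rewrite !Cmod2_conj, <- Hlw. unfold x1, w.
    rewrite !Cmult_conj, Cconj_conj, !Cconj_RtoC, !RtoC_pow, RtoC_opp, RtoC_mult.
    simpl Cpow. ring. }
  pose proof (Re_toeplitz_form_nonneg c p r 1 x1 (- lam) Hcar Hr) as Hnonneg.
  rewrite Hform, re_RtoC in Hnonneg.
  assert (0 <= r ^ 2 * Cmod (c 1%nat) ^ 2) by (apply Rmult_le_pos; apply pow2_ge_0).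
  assert (mu ^ 2 - mu <= 0) by nra.
  nra.
Qed.

(** * The class [A_beta] *)

Lemma taylor_on_disk_at_0 (f : C -> C) (a : nat -> C) : taylor_on_disk f a -> f 0%C = a 0%nat.
Proof.
  intro Hf.
  assert (H0 : is_series (fun n => Cpow 0 n * a n)%C (f 0%C))
    by (apply is_pseries_C, Hf; unfold in_unit_disk; rewrite Cmod_0; lra).
  assert (Hvanish : forall n, (Cpow 0 (S n) * a (S n))%C = 0%C) by (intro n; simpl; ring).
  rewrite (is_series_C_single _ _ Hvanish H0). simpl. ring.
Qed.

Lemma taylor_on_disk_derive_at_0 (f : C -> C) (a : nat -> C) :
  taylor_on_disk f a -> is_derive (K := C_AbsRing) (V := C_NormedModule) f (RtoC 0) (a 1%nat).
Proof.
  intro Hf. destruct (is_derive_taylor_on_disk f a 0%C Hf ltac:(rewrite Cmod_0; lra)) as [D [HD Hder]].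
  pose proof (proj1 (is_pseries_C _ _ _) HD) as HDs.
  assert (Hvanish : forall n, (Cpow 0 (S n) * PS_Cderive a (S n))%C = 0%C) by (intro n; simpl; ring).
  assert (HD1 : @eq C D (a 1%nat)).
  { rewrite (is_series_C_single _ _ Hvanish HDs). unfold PS_Cderive. simpl. ring. }
  rewrite <- HD1. exact Hder.
Qed.

Lemma normalized_analytic_coef (f : C -> C) (a : nat -> C) :
  normalized_analytic f -> taylor_on_disk f a -> a 0%nat = 0%C /\ a 1%nat = 1%C.
Proof.
  intros [a' [Hf' [Ha'0 Ha'1]]] Hf. split.
  - now rewrite <- (taylor_on_disk_at_0 f a Hf), (taylor_on_disk_at_0 f a' Hf').
  - rewrite <- (is_C_derive_unique _ _ _ (taylor_on_disk_derive_at_0 f a Hf)).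
    now rewrite (is_C_derive_unique _ _ _ (taylor_on_disk_derive_at_0 f a' Hf')).
Qed.

Definition mix_coef (beta : R) (a : nat -> C) (n : nat) : C :=
  (RtoC (beta + (1 - beta) * INR (S n)) * a (S n))%C.

Lemma is_pseries_mix_coef (beta : R) (f : C -> C) (a : nat -> C) (z D : C) :
  taylor_on_disk f a -> a 0%nat = 0%C -> Cmod z < 1 -> z <> 0%C ->
  is_pseries (PS_Cderive a) z D ->
  is_pseries (mix_coef beta a) z (RtoC beta * (f z / z) + RtoC (1 - beta) * D)%C.
Proof.
  intros Hf Ha0 Hz Hz0 HD.
  pose proof (proj1 (is_pseries_C _ _ _) (Hf z Hz)) as Hfz.
  apply is_series_C_shift in Hfz; [|rewrite Ha0; ring].
  pose proof (is_series_C_plus _ _ _ _ (is_series_C_scal (RtoC beta / z) _ _ Hfz)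
                (is_series_C_scal (RtoC (1 - beta)) _ _ (proj1 (is_pseries_C _ _ _) HD))) as Hsum.
  apply is_pseries_C.
  replace (RtoC beta * (f z / z) + RtoC (1 - beta) * D)%C
    with (RtoC beta / z * f z + RtoC (1 - beta) * D)%C by (field; exact Hz0).
  refine (is_series_ext _ _ _ _ Hsum). intro n.
  unfold mix_coef, PS_Cderive. rewrite RtoC_plus, !RtoC_mult, RtoC_minus.
  change (Cpow z (S n)) with (z * Cpow z n)%C.
  match goal with |- ?x = ?y => change (@eq C x y) end. field. exact Hz0.
Qed.

Lemma A_beta_caratheodory (beta : R) (f : C -> C) (a : nat -> C) :
  A_beta beta f -> taylor_on_disk f a ->
  caratheodory (mix_coef beta a)
               (fun z => RtoC beta * (f z / z) + RtoC (1 - beta) * C_derive f z)%C.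
Proof.
  intros [Hnorm Hpos] Hf. destruct (normalized_analytic_coef f a Hnorm Hf) as [Ha0 Ha1].
  split.
  - unfold mix_coef. rewrite Ha1. simpl INR. replace (beta + (1 - beta) * 1) with 1 by ring. ring.
  - intros z Hz. assert (Hz0 : z <> 0%C) by (apply Cmod_gt_0; lra).
    split.
    + destruct (is_derive_taylor_on_disk f a z Hf ltac:(lra)) as [D [HD Hder]].
      rewrite (is_C_derive_unique _ _ _ Hder). apply is_pseries_mix_coef; auto; lra.
    + destruct (Hpos z ltac:(unfold in_unit_disk; lra) Hz0) as [d [Hder Hre]].
      rewrite (is_C_derive_unique _ _ _ Hder). lra.
Qed.

Lemma A_beta_Cmod_a3_sub_a2_sq_le (beta : R) (f : C -> C) (a : nat -> C) :
  0 <= beta <= 1 -> A_beta beta f -> taylor_on_disk f a ->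
  Cmod (a 3%nat - a 2%nat * a 2%nat)%C <= 2 / (3 - 2 * beta).
Proof.
  intros Hb Hf Ht.
  set (c := mix_coef beta a).
  set (mu := (3 - 2 * beta) / (2 - beta) ^ 2).
  assert (Hmu : 0 <= mu <= 1).
  { assert (0 < (2 - beta) ^ 2) by nra.
    assert (mu * (2 - beta) ^ 2 = 3 - 2 * beta) by (unfold mu; field; lra). nra. }
  assert (Hcoef : (a 3%nat - a 2%nat * a 2%nat)%C
                  = (RtoC (/ (3 - 2 * beta)) * (c 2%nat - RtoC mu * (c 1%nat * c 1%nat)))%C).
  { unfold c, mix_coef, mu. destruct (a 2%nat) as [u1 v1], (a 3%nat) as [u2 v2]. simpl INR.
    unfold Cminus, Cmult, Cplus, Copp, RtoC. simpl. f_equal; field; lra. }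
  rewrite Hcoef, Cmod_mult, Cmod_R, Rabs_pos_eq by (apply Rlt_le, Rinv_0_lt_compat; lra).
  replace (2 / (3 - 2 * beta)) with (/ (3 - 2 * beta) * 2) by (field; lra).
  apply Rmult_le_compat_l; [apply Rlt_le, Rinv_0_lt_compat; lra|].
  exact (caratheodory_Cmod_coef2_sub_le _ _ mu (A_beta_caratheodory beta f a Hf Ht) Hmu).
Qed.

(** * The extremal function *)

Lemma ex_series_C_bounded_coef (u : nat -> C) (z : C) (B : R) :
  Cmod z < 1 -> (forall n, Cmod (u n) <= B) -> exists l : C, is_series (fun n => Cpow z n * u n)%C l.
Proof.
  intros Hz Hu.
  assert (Hex : ex_series (fun n => Cpow z n * u n)%C).
  { apply (ex_series_le (K := C_AbsRing) (V := C_CompleteNormedModule)) with (b := fun n => B * Cmod z ^ n).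
    - intro n. change (Cmod (Cpow z n * u n)%C <= B * Cmod z ^ n).
      rewrite Cmod_mult, Cmod_pow, Rmult_comm.
      apply Rmult_le_compat_r; [apply pow_le, Cmod_ge_0 | apply Hu].
    - exists (B * / (1 - Cmod z)).
      apply (is_series_scal (K := R_AbsRing) (V := R_NormedModule) B).
      apply is_series_geom. rewrite Rabs_pos_eq; [exact Hz | apply Cmod_ge_0]. }
  destruct Hex as [l Hl]. now exists l.
Qed.

Definition even_coef (n : nat) : R :=
  match n with 0%nat => 1 | _ => if Nat.even n then 2 else 0 end.

Lemma even_coef_bounds (n : nat) : 0 <= even_coef n <= 2.
Proof. unfold even_coef. destruct n; [lra|]. destruct (Nat.even _); lra. Qed.

Lemma is_series_even_coef (z : C) : Cmod z < 1 ->
  is_series (fun n => Cpow z n * RtoC (even_coef n))%C ((1 + z * z) / (1 - z * z))%C.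
Proof.
  intro Hz. set (u := fun n => (Cpow z n * RtoC (even_coef n))%C).
  assert (HB : forall n, Cmod (RtoC (even_coef n)) <= 2).
  { intro n. rewrite Cmod_R. pose proof (even_coef_bounds n). rewrite Rabs_pos_eq; lra. }
  destruct (ex_series_C_bounded_coef _ z 2 Hz HB) as [l Hl]. fold u in Hl.
  assert (Hzz : (1 - z * z)%C <> 0%C).
  { intro E. apply Ceq_minus in E. pose proof (Cmod_ge_0 z).
    assert (Cmod (z * z) = 1) by (rewrite <- E; apply Cmod_1).
    rewrite Cmod_mult in *. nra. }
  (* [u (n + 2) = z^2 u n] for [n >= 1], so [l - u 0 - u 1 - z^2 l] collapses to [u 2 - z^2 u 0]. *)
  assert (Hshift : is_series (fun k => u (2 + k)%nat) (l - (u 0%nat + u 1%nat))%C).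
  { apply is_series_incr_n; [lia|]. simpl pred. rewrite sum_Sn, sum_O.
    match goal with |- is_series _ ?L => replace L with l; [exact Hl|] end.
    change (l = l - (u 0%nat + u 1%nat) + (u 0%nat + u 1%nat))%C. ring. }
  pose proof (is_series_C_minus _ _ _ _ Hshift (is_series_C_scal (z * z) _ _ Hl)) as Hdiff.
  apply (is_series_C_single _ _) in Hdiff.
  2: { intro n. unfold u. simpl Cpow.
       replace (even_coef (2 + S n)) with (even_coef (S n)) by reflexivity. ring. }
  unfold u in Hdiff. simpl in Hdiff.
  replace ((1 + z * z) / (1 - z * z))%C with l; [exact Hl|].
  assert (Hl1 : (l * (1 - z * z))%C = (1 + z * z)%C).
  { transitivity (l - (1 * 1 + z * 1 * 0) - z * z * l + (1 + z * z)
                  - (z * (z * 1) * 2 - z * z * (1 * 1)))%C; [ring | rewrite Hdiff; ring]. }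
  rewrite <- Hl1. field. exact Hzz.
Qed.

Lemma Re_1pz2_div_1mz2_pos (z : C) : Cmod z < 1 -> 0 < Re ((1 + z * z) / (1 - z * z))%C.
Proof.
  intro Hz.
  assert (Hzz : Cmod (z * z) < 1) by (rewrite Cmod_mult; pose proof (Cmod_ge_0 z); nra).
  destruct (z * z)%C as [x y].
  assert (Hxy : x ^ 2 + y ^ 2 < 1).
  { pose proof (Cmod2_alt (x, y)) as Hmod. simpl in Hmod. pose proof (Cmod_ge_0 (x, y)). nra. }
  unfold Cdiv, Cmult, Cinv, Cplus, Cminus, Copp, RtoC, Re. simpl.
  set (d := (1 + - x) * ((1 + - x) * 1) + (0 + - y) * ((0 + - y) * 1)).
  assert (Hd : 0 < d) by (unfold d; nra).
  replace ((1 + x) * ((1 + - x) / d) - (0 + y) * (- (0 + - y) / d)) with ((1 - x ^ 2 - y ^ 2) / d)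
    by (field; lra).
  apply Rdiv_lt_0_compat; lra.
Qed.

Definition extremal_coef (beta : R) (n : nat) : C :=
  match n with
  | 0%nat => 0%C
  | S k => RtoC (even_coef k / (beta + (1 - beta) * INR (S k)))
  end.

Definition extremal_function (beta : R) (z : C) : C :=
  epsilon (inhabits (RtoC 0)) (fun l => is_pseries (extremal_coef beta) z l).

Lemma mix_coef_extremal (beta : R) (n : nat) :
  0 <= beta <= 1 -> mix_coef beta (extremal_coef beta) n = RtoC (even_coef n).
Proof.
  intro Hb. unfold mix_coef, extremal_coef. rewrite <- RtoC_mult. f_equal.
  pose proof (pos_INR n). rewrite S_INR. field. nra.
Qed.

Lemma taylor_on_disk_extremal (beta : R) :
  0 <= beta <= 1 -> taylor_on_disk (extremal_function beta) (extremal_coef beta).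
Proof.
  intros Hb w Hw. unfold extremal_function. apply epsilon_spec.
  assert (Hcoef : forall n, Cmod (extremal_coef beta n) <= 2).
  { intros [|n]; [simpl; rewrite Cmod_0; lra|]. unfold extremal_coef.
    rewrite Cmod_R. pose proof (even_coef_bounds n). pose proof (pos_INR n).
    assert (1 <= beta + (1 - beta) * INR (S n)) by (rewrite S_INR; nra).
    rewrite Rabs_pos_eq by (apply Rdiv_le_0_compat; lra).
    apply (Rmult_le_reg_r (beta + (1 - beta) * INR (S n))); [lra|].
    field_simplify; nra. }
  destruct (ex_series_C_bounded_coef _ w 2 Hw Hcoef) as [l Hl].
  exists l. now apply is_pseries_C.
Qed.

Lemma extremal_function_equation (beta : R) (z D : C) :
  0 <= beta <= 1 -> Cmod z < 1 -> z <> 0%C ->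
  is_pseries (PS_Cderive (extremal_coef beta)) z D ->
  (RtoC beta * (extremal_function beta z / z) + RtoC (1 - beta) * D)%C
    = ((1 + z * z) / (1 - z * z))%C.
Proof.
  intros Hb Hz Hz0 HD.
  pose proof (is_pseries_mix_coef beta _ _ z D (taylor_on_disk_extremal beta Hb) eq_refl Hz Hz0 HD)
    as Hmix.
  apply (is_series_C_unique (fun n => Cpow z n * RtoC (even_coef n))%C).
  - apply is_pseries_C in Hmix. refine (is_series_ext _ _ _ _ Hmix).
    intro n. now rewrite mix_coef_extremal.
  - now apply is_series_even_coef.
Qed.

Lemma extremal_function_sharp (beta : R) :
  0 <= beta <= 1 ->
  exists (f2 : C -> C) (a : nat -> C),
    A_beta beta f2 /\ taylor_on_disk f2 a /\
    (forall z : C, in_unit_disk z -> z <> 0%C ->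
       exists d : C, is_derive (K := C_AbsRing) (V := C_NormedModule) f2 z d /\
         (RtoC beta * (f2 z / z) + RtoC (1 - beta) * d)%C = ((1 + z * z) / (1 - z * z))%C) /\
    Cmod (a 3%nat - a 2%nat * a 2%nat)%C = 2 / (3 - 2 * beta).
Proof.
  intro Hb. pose proof (taylor_on_disk_extremal beta Hb) as Hf.
  assert (Hode : forall z : C, in_unit_disk z -> z <> 0%C ->
    exists d : C, is_derive (K := C_AbsRing) (V := C_NormedModule) (extremal_function beta) z d /\
      (RtoC beta * (extremal_function beta z / z) + RtoC (1 - beta) * d)%C
        = ((1 + z * z) / (1 - z * z))%C).
  { intros z Hz Hz0. destruct (is_derive_taylor_on_disk _ _ z Hf Hz) as [D [HD Hder]].
    exists D. split; [exact Hder|]. now apply extremal_function_equation. }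
  exists (extremal_function beta), (extremal_coef beta).
  split; [split|split; [exact Hf | split; [exact Hode|]]].
  - exists (extremal_coef beta). split; [exact Hf|]. split; [reflexivity|].
    simpl. unfold even_coef. simpl. f_equal. field. lra.
  - intros z Hz Hz0. destruct (Hode z Hz Hz0) as [d [Hder Heq]].
    exists d. split; [exact Hder|]. rewrite Heq. now apply Re_1pz2_div_1mz2_pos.
  - simpl. unfold even_coef. simpl.
    rewrite <- RtoC_mult, <- RtoC_minus, Cmod_R.
    match goal with |- Rabs ?x = _ => replace x with (2 / (3 - 2 * beta)) by (field; lra) end.
    apply Rabs_pos_eq, Rdiv_le_0_compat; lra.
Qed.

Theorem mainTheorem6 (beta : R) (Hb0 : 0 <= beta) (Hb1 : beta <= 1) :
  (forall (f : C -> C) (a : nat -> C),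
      A_beta beta f -> taylor_on_disk f a ->
      Cmod (a 3%nat - a 2%nat * a 2%nat)%C <= 2 / (3 - 2 * beta))
  /\
  (* sharpness: the extremal function f_2 *)
  (exists (f2 : C -> C) (a : nat -> C),
      A_beta beta f2 /\ taylor_on_disk f2 a /\
      (forall z : C, in_unit_disk z -> z <> 0%C ->
         exists d : C, is_derive (K := C_AbsRing) (V := C_NormedModule) f2 z d /\
           (RtoC beta * (f2 z / z) + RtoC (1 - beta) * d)%C
             = ((1 + z * z) / (1 - z * z))%C) /\
      Cmod (a 3%nat - a 2%nat * a 2%nat)%C = 2 / (3 - 2 * beta)).
Proof.
  split.
  - intros f a. apply A_beta_Cmod_a3_sub_a2_sq_le. lra.
  - apply extremal_function_sharp. lra.
Qed.
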